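(* Let $\mathbf x\in\mathbb R^p_+$ and let $x_i,x_j$ be two of its components with $x_i>x_j$. Let $\varepsilon\in(0,(x_i-x_j)/2)$ and let $\mathbf z\in\mathbb R^p_+$ be defined by $z_i=x_i-\varepsilon$, $z_j=x_j+\varepsilon$, and $z_k=x_k$ for $k\ne i,j$. Let $\mathbf w$ satisfy $w_1\ge w_2\ge\cdots\ge w_p\ge0$, and let $\Delta=\min\{w_l-w_{l+1}: l=1,\dots,p-1\}$. Then $$\Omega_{\mathbf w}(\mathbf x)-\Omega_{\mathbf w}(\mathbf z)\ge\Delta\,\varepsilon.$$
   Context: $\Omega_{\mathbf w}(\mathbf x)=\sum_{i=1}^p w_i|x|_{[i]}$, where $|x|_{[i]}$ denotes the $i$-th largest component of $\mathbf x$ in magnitude. *)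

From HB Require Import structures.
From mathcomp Require Import all_boot all_order all_algebra.
Set Implicit Arguments. Unset Strict Implicit. Unset Printing Implicit Defensive.
Import Order.TTheory GRing.Theory Num.Theory.
Local Open Scope ring_scope.

(* Vectors of R^p are functions 'I_p -> R; paper index l (1-based) is l-1 here. *)

Definition sorted_abs (R : realDomainType) (p : nat) (x : 'I_p -> R) : seq R :=
  sort (fun a b : R => b <= a) [seq `|x k| | k <- enum 'I_p].

Definition Omega (R : realDomainType) (p : nat) (w x : 'I_p -> R) : R :=
  \sum_(i < p) w i * nth 0 (sorted_abs x) i.

(* nat-indexed access to a vector (0 outside range; only used in range) *)
Definition vat (R : realDomainType) (p : nat) (w : 'I_p -> R) (k : nat) : R :=
  if insub k is Some o then w o else 0.

(* the consecutive gaps w_l - w_{l+1}, l = 1..p-1 (0-based: l = 0..p-2) *)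
Definition gaps (R : realDomainType) (p : nat) (w : 'I_p -> R) : seq R :=
  [seq vat w l - vat w l.+1 | l <- iota 0 p.-1].

(* Delta = min of the gaps (meaningful when p >= 2, i.e. gaps nonempty) *)
Definition minGap (R : realDomainType) (p : nat) (w : 'I_p -> R) : R :=
  foldr Num.min (head 0 (gaps w)) (gaps w).

From HB Require Import structures.
From mathcomp Require Import all_boot all_order all_algebra all_fingroup.
From mathcomp Require Import ring lra zify.
Import Order.TTheory GRing.Theory Num.Theory.
Local Open Scope ring_scope.
Set Implicit Arguments. Unset Strict Implicit.

(* By the rearrangement inequality, Omega_w(x) is the largest value of
   sum_k w_(s k) |x_k| over all permutations s, and Omega_w(z) is attained at
   a permutation s sorting |z|.  Evaluating at x the permutation that sorts z
   therefore gives Omega_w(x) - Omega_w(z) >= (w_(s i) - w_(s j)) eps, since x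
   and z differ only at i and j.  As z_i > z_j, s puts i strictly before j, so
   the weight difference is at least one consecutive gap, hence at least Delta. *)

Section Rearrangement.

Variables (R : realDomainType) (p : nat) (w a : 'I_p -> R).
Hypotheses (w_noninc : forall l m : 'I_p, (l <= m)%N -> w m <= w l)
           (a_noninc : forall l m : 'I_p, (l <= m)%N -> a m <= a l).

Lemma sum_le_tperm (t : 'S_p) (n m : 'I_p) :
  (n <= m)%N -> (n <= t n)%N -> t m = n ->
  \sum_k w (t k) * a k <= \sum_k w ((tperm n m * t)%g k) * a k.
Proof.
move=> le_nm le_n_tn tm_n; have [<-|neq_nm] := eqVneq n m.
  by rewrite tperm1 mul1g.
rewrite (bigD1 n) // (bigD1 m) 1?eq_sym //= [leRHS](bigD1 n) //.
rewrite [X in _ <= _ + X](bigD1 m) 1?eq_sym //= !permM tpermL tpermR tm_n !addrA.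
apply: lerD; last first.
  by apply: ler_sum => k /andP [kn km]; rewrite permM tpermD // eq_sym.
have : 0 <= (w n - w (t n)) * (a n - a m).
  by apply: mulr_ge0; rewrite subr_ge0; [apply: w_noninc | apply: a_noninc].
nra.
Qed.

(* Induction on the number k of indices not yet known to be fixed: the least
   index n that t may move is put in place by sum_le_tperm. *)
Lemma rearrangement_perm (t : 'S_p) : \sum_k w (t k) * a k <= \sum_k w k * a k.
Proof.
suff : forall k (t : 'S_p), (forall m : 'I_p, (m < p - k)%N -> t m = m) ->
    \sum_k w (t k) * a k <= \sum_k w k * a k.
  by move=> /(_ p t); apply => m; rewrite subnn.
elim=> [|k IHk] {}t t_fix.
  by apply: ler_sum => m _; rewrite t_fix ?subn0.
have [le_pk|lt_kp] := leqP p k.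
  by apply: IHk => m; rewrite (eqP (_ : p - k == 0)%N) ?subn_eq0.
have n_lt : (p - k.+1 < p)%N by lia.
pose n := Ordinal n_lt; pose m := (t^-1)%g n.
have tm_n : t m = n by rewrite permKV.
have le_nm : (n <= m)%N.
  rewrite leqNgt; apply/negP => lt_mn.
  by move: (lt_mn); rewrite -{1}(t_fix _ lt_mn) tm_n ltnn.
have le_n_tn : (n <= t n)%N.
  rewrite leqNgt; apply/negP => lt_tn.
  by move: (lt_tn); rewrite (perm_inj (t_fix _ lt_tn)) ltnn.
apply: le_trans (sum_le_tperm le_nm le_n_tn tm_n) _.
apply: IHk => l lt_l; rewrite permM.
have [lt_ln|le_nl] := ltnP l n.
  have ln : l != n by rewrite neq_ltn lt_ln.
  have lm : l != m by apply: contraTneq lt_ln => ->; rewrite -leqNgt.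
  by rewrite tpermD 1?eq_sym // t_fix.
have -> : l = n by apply/val_inj; move: lt_l le_nl; rewrite /n /=; lia.
by rewrite tpermL.
Qed.

Lemma rearrangement (s t : 'S_p) : \sum_k w (t k) * a (s k) <= \sum_k w k * a k.
Proof.
rewrite (reindex_inj (@perm_inj _ (s^-1)%g)) /=.
apply: le_trans (rearrangement_perm (s^-1 * t)%g).
by under eq_bigr => k _ do rewrite permKV -permM.
Qed.

End Rearrangement.

Section SortedMagnitudes.

Variables (R : realDomainType) (p : nat).

Lemma size_sorted_abs (x : 'I_p -> R) : size (sorted_abs x) = p.
Proof. by rewrite size_sort size_map size_enum_ord. Qed.

Lemma sorted_abs_nonincreasing (x : 'I_p -> R) (l m : 'I_p) :
  (l <= m)%N -> nth 0 (sorted_abs x) m <= nth 0 (sorted_abs x) l.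
Proof.
have ge_trans : transitive (fun a b : R => b <= a).
  by move=> b c d /= cb dc; apply: le_trans dc cb.
move=> le_lm; apply: (sorted_leq_nth ge_trans (@lexx _ _)) => //.
- by apply: sort_sorted => b c /=; apply: le_total.
- by rewrite inE size_sorted_abs.
- by rewrite inE size_sorted_abs.
Qed.

Lemma sorted_abs_perm (x : 'I_p -> R) :
  exists s : 'S_p, forall k, `|x k| = nth 0 (sorted_abs x) (s k).
Proof.
have : perm_eq [seq `|x k| | k <- enum 'I_p]
               (Tuple (introT eqP (size_sorted_abs x))).
  by rewrite /= perm_sym perm_sort.
case/tuple_permP => s s_def; exists s => k.
move/(congr1 (nth 0 ^~ k)): s_def.
rewrite (nth_map k) ?size_enum_ord // nth_ord_enum => ->.
by rewrite -!tnth_nth tnth_mktuple (tnth_nth 0).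
Qed.

Lemma Omega_ge_perm_sum (w x : 'I_p -> R) (t : 'S_p) :
  (forall l m : 'I_p, (l <= m)%N -> w m <= w l) ->
  \sum_k w (t k) * `|x k| <= Omega w x.
Proof.
move=> w_noninc; have [s s_def] := sorted_abs_perm x.
under eq_bigr => k _ do rewrite s_def.
exact/rearrangement/sorted_abs_nonincreasing.
Qed.

Lemma Omega_perm_sum (w x : 'I_p -> R) :
  exists s : 'S_p, Omega w x = \sum_k w (s k) * `|x k|
    /\ forall k l, `|x l| < `|x k| -> (s k < s l)%N.
Proof.
have [s s_def] := sorted_abs_perm x; exists s; split.
  rewrite /Omega (reindex_inj (@perm_inj _ s)) /=.
  by apply: eq_bigr => k _; rewrite s_def.
move=> k l; rewrite !s_def ltnNge; apply: contraTN.
by move/(sorted_abs_nonincreasing x); rewrite -leNgt.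
Qed.

End SortedMagnitudes.

Lemma foldr_min_le (R : realDomainType) (s : seq R) (h y : R) :
  y \in s -> foldr Num.min h s <= y.
Proof.
elim: s => [|c s IHs] //=; rewrite inE ge_min => /orP [/eqP ->|ys].
  by rewrite lexx.
by rewrite IHs ?orbT.
Qed.

Lemma minGap_le_sub (R : realDomainType) (p : nat) (w : 'I_p -> R) (l m : 'I_p) :
  (forall l m : 'I_p, (l <= m)%N -> w m <= w l) ->
  (l < m)%N -> minGap w <= w l - w m.
Proof.
move=> w_noninc lt_lm.
have lt_l1p : (l.+1 < p)%N by apply: leq_ltn_trans lt_lm (ltn_ord m).
have gap_l : vat w l - vat w l.+1 \in gaps w.
  by apply/mapP; exists (nat_of_ord l) => //; rewrite mem_iota /=; lia.
apply: le_trans (foldr_min_le _ gap_l) _.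
rewrite /vat valK insubT lerD2l lerN2.
exact: w_noninc.
Qed.

Theorem lemma1 (R : realFieldType) (p : nat) (x w : 'I_p -> R) (i j : 'I_p)
    (eps : R)
    (hx : forall k, 0 <= x k)
    (hij : x j < x i)
    (heps0 : 0 < eps) (heps1 : eps < (x i - x j) / 2)
    (hw : forall l m : 'I_p, (l <= m)%N -> w m <= w l)
    (hw0 : forall l, 0 <= w l) :
  let z := fun k : 'I_p => if k == i then x i - eps
                           else if k == j then x j + eps else x k in
  Omega w x - Omega w z >= minGap w * eps.
Proof.
cbv zeta; set z := (fun k : 'I_p => _).
have ij : i != j by apply: contraTneq hij => ->; rewrite ltxx.
have zi : z i = x i - eps by rewrite /z eqxx.
have zj : z j = x j + eps by rewrite /z eq_sym (negbTE ij) eqxx.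
have z_ge0 k : 0 <= z k.
  have xj_ge0 := hx j; rewrite /z.
  case: ifP => _; first lra.
  by case: ifP => _; [lra | exact: hx].
have [s [Oz s_mono]] := Omega_perm_sum w z.
have Ox := Omega_ge_perm_sum x s hw.
have shift : \sum_k w (s k) * `|x k| - \sum_k w (s k) * `|z k|
             = (w (s i) - w (s j)) * eps.
  rewrite -sumrB (bigD1 i) // (bigD1 j) 1?eq_sym //= big1 ?addr0.
    by rewrite !ger0_norm ?hx ?z_ge0 // zi zj; ring.
  by move=> k /andP [ki kj]; rewrite /z (negbTE ki) (negbTE kj) subrr.
have lt_sij : (s i < s j)%N by apply: s_mono; rewrite !ger0_norm // zi zj; lra.
have : minGap w * eps <= (w (s i) - w (s j)) * eps.
  by apply: ler_wpM2r; [exact: ltW | exact: minGap_le_sub hw lt_sij].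
rewrite -shift Oz; lra.
Qed.
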